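(* Fix a monomial order on $S$. Let $J,E,E'$ be ideals of $S$ such that $(J,E)$ and $(J,E')$ are G-nice pairs. The following are equivalent: (a) $J\cap E+J\cap E'=J\cap(E+E')$ and $(J,E+E')$ is a G-nice pair; (b) $\mathrm{in}(J\cap E+J\cap E')=\mathrm{in}(J)\cap\mathrm{in}(E+E')$.
   Context: $K$ is a field and $S=K[x_1,\ldots,x_n]$ with a fixed monomial order. For $0\neq f\in S$, $\mathrm{in}(f)$ denotes its leading monomial; for an ideal $I$, $\mathrm{in}(I)$ is the ideal generated by the leading monomials of the nonzero elements of $I$. A pair $(J,E)$ of ideals of $S$ is called Gröbner nice (G-nice) if $\mathrm{in}(J+E)=\mathrm{in}(J)+\mathrm{in}(E)$ (equivalently, the union of a Gröbner basis of $J$ and a Gröbner basis of $E$ is a Gröbner basis of $J+E$; equivalently, $\mathrm{in}(J\cap E)=\mathrm{in}(J)\cap\mathrm{in}(E)$). *)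

From mathcomp Require Import all_boot all_order all_algebra.
From mathcomp Require Import mpoly.
Set Implicit Arguments. Unset Strict Implicit. Unset Printing Implicit Defensive.
Import GRing.Theory.
Local Open Scope ring_scope.

(* A monomial order on the monomials 'X_{1..n} of S = K[x_1..x_n]:
   a total order, compatible with multiplication of monomials (addition of
   exponent vectors), with 1 (the zero exponent) as least element
   (equivalently, a multiplicative total well-order). *)
Record monomial_order (n : nat) := MonomialOrder {
  mle : rel 'X_{1..n};
  mle_refl : reflexive mle;
  mle_anti : antisymmetric mle;
  mle_trans : transitive mle;
  mle_total : total mle;
  mle_addr : forall m1 m2 m : 'X_{1..n}, mle m1 m2 -> mle (m1 + m)%MM (m2 + m)%MM;
  mle_0 : forall m : 'X_{1..n}, mle 0%MM m }.

Section Ideals.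
Variables (K : fieldType) (n : nat).
Local Notation S := {mpoly K[n]}.

Definition is_ideal (I : S -> Prop) : Prop :=
  [/\ I 0, (forall f g, I f -> I g -> I (f + g)) & (forall h f, I f -> I (h * f))].

Definition ideal_sum (I J : S -> Prop) : S -> Prop :=
  fun f => exists g h, [/\ I g, J h & f = g + h].

Definition ideal_cap (I J : S -> Prop) : S -> Prop := fun f => I f /\ J f.

Definition ideal_eq (I J : S -> Prop) : Prop := forall f, I f <-> J f.

Definition ideal_gen (G : S -> Prop) : S -> Prop :=
  fun f => exists (k : nat) (h g : 'I_k -> S),
    (forall i, G (g i)) /\ f = \sum_(i < k) h i * g i.

Variable ord : monomial_order n.

Definition is_lead_mnm (f : S) (m : 'X_{1..n}) : Prop :=
  m \in msupp f /\ forall m', m' \in msupp f -> mle ord m' m.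

Definition init_ideal (I : S -> Prop) : S -> Prop :=
  ideal_gen (fun p => exists f m, [/\ I f, f != 0, is_lead_mnm f m & p = 'X_[m]]).

Definition Gnice (J E : S -> Prop) : Prop :=
  ideal_eq (init_ideal (ideal_sum J E)) (ideal_sum (init_ideal J) (init_ideal E)).

End Ideals.

From mathcomp Require Import all_boot all_order all_algebra.
From mathcomp Require Import mpoly.
From Stdlib Require Import Setoid Classical ClassicalEpsilon.
Set Implicit Arguments. Unset Strict Implicit. Unset Printing Implicit Defensive.

Import GRing.Theory.

(* Everything is reduced to statements about leading monomials.  Write LM(I)
   for the set of leading monomials of nonzero elements of an ideal I, so that
   in(I) is the monomial ideal with monomials LM(I); since LM(I) is closed
   under multiplication by monomials, a polynomial lies in in(I) iff all its
   monomials lie in LM(I), and ideal equalities between in(-), sums and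
   intersections of such ideals become equalities of sets of monomials.
   - Dickson's lemma shows that a monomial order is a well-order, which
     gives an induction principle on the leading monomial.
   - Reduction by leading terms then yields:
     (i) if A ⊆ B are ideals with LM(B) ⊆ LM(A), then A = B;
     (ii) (I, J) is G-nice iff LM(I ∩ J) = LM(I) ∩ LM(J), i.e.
          in(I ∩ J) = in(I) ∩ in(J) (via standard representations for one
          direction and removal of top cancellations for the other).
   - The theorem follows with A = J∩E + J∩E' ⊆ B = J ∩ (E + E'): (a) gives
     in(A) = in(B) = in(J) ∩ in(E + E') by (ii); conversely (b) forces
     LM(B) ⊆ LM(A), so A = B by (i), and then (J, E + E') is G-nice by (ii). *)

Section Dickson.

Lemma tail_min (g : nat -> nat) p :
  exists i, p < i /\ forall j, p < j -> g i <= g j.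
Proof.
suff bounded v i : p < i -> g i <= v ->
    exists i, p < i /\ forall j, p < j -> g i <= g j.
  exact: (bounded (g p.+1) p.+1).
elim: v i => [|v IH] i lt_pi le_giv.
  by exists i; split=> // j _; rewrite (leq_trans le_giv).
have [[j [lt_pj lt_gji]]|no_smaller] := classic (exists j, p < j /\ g j < g i).
  by apply: (IH j lt_pj); rewrite -ltnS (leq_trans lt_gji).
exists i; split=> // j lt_pj; rewrite leqNgt; apply/negP => lt_gji.
by apply: no_smaller; exists j.
Qed.

(* Every sequence of naturals has a nondecreasing subsequence: take
   successive minima of the tails. *)
Lemma monotone_subseq (g : nat -> nat) :
  exists psi : nat -> nat,
    (forall i, psi i < psi i.+1) /\ forall i, g (psi i) <= g (psi i.+1).
Proof.
pose next p := proj1_sig (constructive_indefinite_description _ (tail_min g p)).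
have nextP p : p < next p /\ forall j, p < j -> g (next p) <= g j.
  by rewrite /next; case: constructive_indefinite_description.
exists (fun k => iter k.+1 next 0); split=> i /=; first exact: (nextP _).1.
by apply: (nextP _).2; apply: ltn_trans (nextP _).1 (nextP _).1.
Qed.

Variable n : nat.

Lemma dickson_coords k (f : nat -> 'X_{1..n}) :
  exists phi : nat -> nat, (forall i, phi i < phi i.+1) /\
    forall i (c : 'I_n), c < k -> f (phi i) c <= f (phi i.+1) c.
Proof.
elim: k => [|k [phi [phi_lt phi_le]]]; first by exists id.
have [psi [psi_lt psi_le]] := monotone_subseq (fun i => nth 0 (f (phi i)) k).
have phi_mono : {homo phi : i j / i < j} := homo_ltn ltn_trans phi_lt.
exists (phi \o psi); split=> [i|i c]; first exact: phi_mono.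
rewrite ltnS leq_eqVlt => /orP [/eqP eq_ck|lt_ck] /=.
  by rewrite !(mnm_nth 0) eq_ck; apply: psi_le.
have phi_homo := homo_leq (f := fun a => f (phi a) c) leqnn leq_trans
  (fun a => phi_le a c lt_ck).
exact: phi_homo (ltnW (psi_lt i)).
Qed.

Lemma dickson (f : nat -> 'X_{1..n}) : exists i j, i < j /\ (f i <= f j)%MM.
Proof.
have [phi [phi_lt phi_le]] := dickson_coords n f.
by exists (phi 0), (phi 1); split=> //; apply/mnm_lepP => c; apply: phi_le.
Qed.

End Dickson.

Section MonomialOrder.
Variables (n : nat) (ord : monomial_order n).
Local Notation mle := (mle ord).

Definition mlt (a b : 'X_{1..n}) := mle a b && (a != b).

Lemma mle_eq a b : mle a b -> mle b a -> a = b.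
Proof. by move=> le_ab le_ba; apply/(@mle_anti _ ord); rewrite le_ab le_ba. Qed.

Lemma mlt_mle a b : mlt a b -> mle a b.
Proof. by case/andP. Qed.

Lemma mlt_asym a b : mlt a b -> mle b a -> False.
Proof.
by case/andP=> le_ab ne_ab /(mle_eq le_ab) eq_ab; rewrite eq_ab eqxx in ne_ab.
Qed.

Lemma mle_mlt_trans a b c : mle a b -> mlt b c -> mlt a c.
Proof.
move=> le_ab /[dup] lt_bc /andP [le_bc _]; rewrite /mlt (mle_trans le_ab le_bc).
by apply/eqP => eq_ac; subst c; apply: mlt_asym lt_bc le_ab.
Qed.

Lemma mlt_trans a b c : mlt a b -> mlt b c -> mlt a c.
Proof. by move/mlt_mle; apply: mle_mlt_trans. Qed.

(* Divisibility implies comparability: add a to 0 <= b - a. *)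
Lemma mle_div a b : (a <= b)%MM -> mle a b.
Proof.
by move=> dv_ab; rewrite -(submK dv_ab) -{1}[a]add0m; apply/mle_addr/mle_0.
Qed.

(* A monomial order is a well-order: an infinite strictly descending chain
   would contradict Dickson's lemma. *)
Lemma mlt_wf : well_founded mlt.
Proof.
move=> m0; apply: NNPP => not_acc0.
have descend m : ~ Acc mlt m -> exists m', mlt m' m /\ ~ Acc mlt m'.
  move=> not_acc; apply: NNPP => no_desc; apply: not_acc; constructor => m' lt_m'.
  by apply: NNPP => not_acc'; apply: no_desc; exists m'.
pose T := {m | ~ Acc mlt m}.
have next (t : T) : {t' : T | mlt (sval t') (sval t)}.
  case: t => m not_acc /=.
  have [m' [lt_m' not_acc']] := constructive_indefinite_description _ (descend m not_acc).
  by exists (exist _ m' not_acc').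
pose f k := sval (iter k (fun t => sval (next t)) (exist _ m0 not_acc0)).
have f_desc : {homo f : i j / i < j >-> mlt j i}.
  apply: (homo_ltn (r := fun x y => mlt y x)) => [y x z lt_yx lt_zy|k].
    exact: mlt_trans lt_zy lt_yx.
  by rewrite /f /=; case: (next _).
have [i [j [lt_ij dv_ij]]] := dickson f.
exact: mlt_asym (f_desc i j lt_ij) (mle_div dv_ij).
Qed.

Lemma seq_max (s : seq 'X_{1..n}) : s != [::] ->
  exists2 x, x \in s & forall y, y \in s -> mle y x.
Proof.
elim: s => // a [|b s] IH _.
  by exists a; rewrite ?mem_head // => y; rewrite mem_seq1 => /eqP ->; apply: mle_refl.
have [x x_in x_max] := IH isT.
have [le_ax|le_xa] := orP (mle_total ord a x).
  exists x; first by rewrite inE x_in orbT.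
  by move=> y; rewrite inE => /orP [/eqP ->|/x_max].
exists a; first exact: mem_head.
move=> y; rewrite inE => /orP [/eqP ->|/x_max le_yx]; first exact: mle_refl.
exact: mle_trans le_yx le_xa.
Qed.

End MonomialOrder.

Section InitialIdeals.
Variables (K : fieldType) (n : nat) (ord : monomial_order n).
Local Notation S := {mpoly K[n]}.
Local Notation mle := (mle ord).
Local Notation mlt := (mlt ord).
Local Notation is_lead := (is_lead_mnm ord).
Local Open Scope ring_scope.
Implicit Types (f g h j e : S) (m M : 'X_{1..n}).

Definition supp_in (P : 'X_{1..n} -> Prop) f := forall m, m \in msupp f -> P m.

Local Notation supp_le f M := (supp_in (mle^~ M) f).
Local Notation supp_lt f M := (supp_in (mlt^~ M) f).

Lemma supp_in_weaken (P Q : 'X_{1..n} -> Prop) f :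
  (forall m, P m -> Q m) -> supp_in P f -> supp_in Q f.
Proof. by move=> PQ Pf m /Pf /PQ. Qed.

Lemma supp_in0 P : supp_in P 0.
Proof. by move=> m; rewrite mcoeff_msupp mcoeff0 eqxx. Qed.

Lemma supp_inD P f g : supp_in P f -> supp_in P g -> supp_in P (f + g).
Proof. by move=> Pf Pg m /msuppD_le; rewrite mem_cat => /orP [/Pf|/Pg]. Qed.

Lemma supp_inB P f g : supp_in P f -> supp_in P g -> supp_in P (f - g).
Proof. by move=> Pf Pg m /msuppB_le; rewrite mem_cat => /orP [/Pf|/Pg]. Qed.

Lemma supp_inZ P c f : supp_in P f -> supp_in P (c *: f).
Proof. by move=> Pf m /msuppZ_le /Pf. Qed.

Lemma supp_lt_coef f M : supp_lt f M -> f@_M = 0.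
Proof.
move=> lt_f; apply: memN_msupp_eq0; apply/negP => /lt_f.
by rewrite /mlt eqxx andbF.
Qed.

Lemma supp_le_lt f M : supp_le f M -> f@_M = 0 -> supp_lt f M.
Proof.
move=> le_f f_M m m_in; rewrite /mlt (le_f m m_in) /=.
by apply: contraTneq m_in => ->; rewrite mcoeff_msupp f_M eqxx.
Qed.

Lemma lead_exists f : f != 0 -> exists m, is_lead f m.
Proof.
by rewrite -msupp_eq0 => /(seq_max ord) [m m_in m_max]; exists m.
Qed.

Lemma lead_coef_neq0 f m : is_lead f m -> f@_m != 0.
Proof. by case; rewrite mcoeff_msupp. Qed.

Lemma lead_neq0 f m : is_lead f m -> f != 0.
Proof. by move/lead_coef_neq0; apply: contraNneq => ->; rewrite mcoeff0. Qed.

Lemma lead_supp_le f m : is_lead f m -> supp_le f m.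
Proof. by case. Qed.

Lemma lead_of_supp_le f m : supp_le f m -> f@_m != 0 -> is_lead f m.
Proof. by move=> le_f f_m; split; rewrite ?mcoeff_msupp. Qed.

Lemma reduce_lt f g M : supp_le f M -> is_lead g M ->
  supp_lt (f - (f@_M / g@_M) *: g) M.
Proof.
move=> le_f lead_g; apply: supp_le_lt.
  by apply: supp_inB le_f _; apply: supp_inZ; apply: lead_supp_le lead_g.
by rewrite mcoeffB mcoeffZ divfK ?subrr // lead_coef_neq0.
Qed.

Lemma lead_ind (P : S -> Prop) :
  P 0 -> (forall f m, is_lead f m -> (forall g, supp_lt g m -> P g) -> P f) ->
  forall f, P f.
Proof.
move=> P0 step.
have lead_case m : forall f, is_lead f m -> P f.
  elim/(well_founded_ind (mlt_wf ord)): m => m IH f lead_f.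
  apply: (step _ _ lead_f) => g lt_g.
  have [->|/lead_exists [m1 lead_g]] := eqVneq g 0; first exact: P0.
  exact: IH (lt_g _ lead_g.1) _ lead_g.
by move=> f; have [->|/lead_exists [m /lead_case]] := eqVneq f 0.
Qed.

Lemma joint_bound j e : j + e != 0 ->
  exists2 M, supp_le j M /\ supp_le e M & (M \in msupp j) || (M \in msupp e).
Proof.
move=> nz; have ne : msupp j ++ msupp e != [::].
  apply/eqP => eq_nil; have [m [/msuppD_le]] := lead_exists nz.
  by rewrite eq_nil.
have [M M_in M_max] := seq_max ord ne.
exists M; last by rewrite -mem_cat.
by split=> m m_in; apply: M_max; rewrite mem_cat m_in ?orbT.
Qed.

Implicit Types (A B I J X Y : S -> Prop).

Lemma ideal0 I : is_ideal I -> I 0.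
Proof. by case. Qed.

Lemma idealD I f g : is_ideal I -> I f -> I g -> I (f + g).
Proof. by case=> _ + _; apply. Qed.

Lemma idealM I h f : is_ideal I -> I f -> I (h * f).
Proof. by case=> _ _; apply. Qed.

Lemma idealZ I c f : is_ideal I -> I f -> I (c *: f).
Proof. by move=> idI If; rewrite -mul_mpolyC; apply: idealM. Qed.

Lemma idealB I f g : is_ideal I -> I f -> I g -> I (f - g).
Proof.
by move=> idI If Ig; apply: idealD => //; rewrite -scaleN1r; apply: idealZ.
Qed.

Lemma sum_ideal I J : is_ideal I -> is_ideal J -> is_ideal (ideal_sum I J).
Proof.
move=> idI idJ; split.
- by exists 0, 0; rewrite addr0; split=> //; apply: ideal0.
- move=> _ _ [a [b [Ia Jb ->]]] [c [d [Ic Jd ->]]].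
  by exists (a + c), (b + d); rewrite addrACA; split=> //; apply: idealD.
- move=> h _ [a [b [Ia Jb ->]]].
  by exists (h * a), (h * b); rewrite mulrDr; split=> //; apply: idealM.
Qed.

Lemma cap_ideal I J : is_ideal I -> is_ideal J -> is_ideal (ideal_cap I J).
Proof.
move=> idI idJ; split; first by split; apply: ideal0.
- by move=> f g [If Jf] [Ig Jg]; split; apply: idealD.
- by move=> h f [If Jf]; split; apply: idealM.
Qed.

Lemma sum_l I J f : is_ideal J -> I f -> ideal_sum I J f.
Proof. by move=> idJ If; exists f, 0; rewrite addr0; split=> //; apply: ideal0. Qed.

Lemma sum_r I J f : is_ideal I -> J f -> ideal_sum I J f.
Proof. by move=> idI Jf; exists 0, f; rewrite add0r; split=> //; apply: ideal0. Qed.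

Lemma ideal_gen_ideal (G : S -> Prop) : is_ideal (ideal_gen G).
Proof.
split.
- by exists 0, (fun _ => 0), (fun _ => 0); split; [case | rewrite big_ord0].
- move=> _ _ [k1 [h1 [g1 [Gg1 ->]]]] [k2 [h2 [g2 [Gg2 ->]]]].
  pose pick T (a : 'I_k1 -> T) b (i : 'I_(k1 + k2)) :=
    match split i with inl i1 => a i1 | inr i2 => b i2 end.
  exists (k1 + k2), (pick _ h1 h2), (pick _ g1 g2); split.
    by move=> i; rewrite /pick; case: (split i).
  by rewrite big_split_ord /pick; congr (_ + _); apply: eq_bigr => i _;
    rewrite ?(unsplitK (inl _)) ?(unsplitK (inr _)).
- move=> h _ [k [h1 [g1 [Gg1 ->]]]].
  exists k, (fun i => h * h1 i), g1; split=> //.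
  by rewrite mulr_sumr; apply: eq_bigr => i _; rewrite mulrA.
Qed.

Definition LM I m := exists2 f, I f & is_lead f m.

Lemma LM_of I f m : I f -> is_lead f m -> LM I m.
Proof. by exists f. Qed.

Lemma LM_mono X Y m : (forall f, X f -> Y f) -> LM X m -> LM Y m.
Proof. by move=> XY [f /XY Yf lead_f]; exists f. Qed.

(* Leading monomials of an ideal are closed under multiplication by
   monomials, since multiplying by 'X_[u] shifts the whole support by u. *)
Lemma LM_mulX I u m : is_ideal I -> LM I m -> LM I (u + m)%MM.
Proof.
move=> idI [f If [m_in m_max]]; have supp_fX := perm_mem (msuppMX f u).
exists (f * 'X_[u]); first by rewrite mulrC; apply: idealM.
split; first by rewrite supp_fX; apply: map_f.
move=> y; rewrite supp_fX => /mapP [m' m'_in ->].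
by rewrite ![(u + _)%MM]addmC; apply/mle_addr/m_max.
Qed.

Lemma init_ideal_ideal I : is_ideal (init_ideal ord I).
Proof. exact: ideal_gen_ideal. Qed.

Lemma init_monomial I m c : LM I m -> init_ideal ord I (c *: 'X_[m]).
Proof.
move=> [f If lead_f]; exists 1, (fun _ => c%:MP), (fun _ => 'X_[m]); split.
  by move=> _; exists f, m; split=> //; apply: lead_neq0 lead_f.
by rewrite big_ord1 mul_mpolyC.
Qed.

Lemma terms_ind (P : S -> Prop) f :
  P 0 -> (forall a b, P a -> P b -> P (a + b)) ->
  (forall m, m \in msupp f -> P (f@_m *: 'X_[m])) -> P f.
Proof.
move=> P0 PD Pterm; rewrite [f in P f]mpolyE big_seq.
by apply: big_ind => // m; apply: Pterm.
Qed.

Lemma init_char I : is_ideal I -> ideal_eq (init_ideal ord I) (supp_in (LM I)).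
Proof.
move=> idI f; split=> [[k [h [g [Ig ->]]]]|LMf].
  apply: big_ind => [|a b|i _]; [exact: supp_in0|exact: supp_inD|].
  have [p [m [Ip p_nz lead_p ->]]] := Ig i.
  move=> y; rewrite (perm_mem (msuppMX _ _)) => /mapP [m' _ ->].
  by rewrite addmC; apply: LM_mulX => //; exists p.
apply: terms_ind => [|a b|m /LMf]; last exact: init_monomial.
  exact: ideal0 (init_ideal_ideal I).
exact: idealD (init_ideal_ideal I).
Qed.

Lemma init_sum_char I J : is_ideal I -> is_ideal J ->
  ideal_eq (ideal_sum (init_ideal ord I) (init_ideal ord J))
           (supp_in (fun m => LM I m \/ LM J m)).
Proof.
move=> idI idJ f; split=> [[g [h [/(init_char idI) LMg /(init_char idJ) LMh]]]|LMf].
  by move=> ->=> m /msuppD_le; rewrite mem_cat => /orP [/LMg|/LMh]; [left|right].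
have id_sum := sum_ideal (init_ideal_ideal I) (init_ideal_ideal J).
apply: terms_ind => [|a b|m /LMf [LMm|LMm]].
- exact: ideal0 id_sum.
- exact: idealD id_sum.
- exact: sum_l (init_ideal_ideal J) (init_monomial _ LMm).
- exact: sum_r (init_ideal_ideal I) (init_monomial _ LMm).
Qed.

Lemma init_cap_char I J : is_ideal I -> is_ideal J ->
  ideal_eq (ideal_cap (init_ideal ord I) (init_ideal ord J))
           (supp_in (fun m => LM I m /\ LM J m)).
Proof.
move=> idI idJ f; rewrite /ideal_cap (init_char idI f) (init_char idJ f).
split=> [[LMIf LMJf] m m_in|LMf]; first by split; [apply: LMIf|apply: LMJf].
by split=> m /LMf [].
Qed.

(* Two sets of polynomials described by supports agree iff the describing
   sets of monomials agree (test on the monomials themselves). *)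
Lemma ideal_eq_supp (P Q : 'X_{1..n} -> Prop) :
  ideal_eq (supp_in P) (supp_in Q) <-> (forall m, P m <-> Q m).
Proof.
split=> [PQ m|PQ f]; last by split=> PQf m /PQf /PQ.
have supp_X : forall R : 'X_{1..n} -> Prop, supp_in R 'X_[m] <-> R m.
  move=> R; split=> [RX|Rm m' /mem_msuppXP <- //].
  by apply: RX; rewrite msuppX mem_head.
by rewrite -!supp_X; apply: PQ.
Qed.

Lemma ideal_eq_congr X X' Y Y' :
  ideal_eq X X' -> ideal_eq Y Y' -> (ideal_eq X Y <-> ideal_eq X' Y').
Proof.
by move=> eX eY; split=> eXY f; [rewrite -eX -eY|rewrite eX eY]; apply: eXY.
Qed.

Lemma gnice_LM I J : is_ideal I -> is_ideal J ->
  Gnice ord I J <-> forall m, LM (ideal_sum I J) m <-> LM I m \/ LM J m.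
Proof.
move=> idI idJ; rewrite /Gnice.
rewrite (ideal_eq_congr (init_char (sum_ideal idI idJ)) (init_sum_char idI idJ)).
exact: ideal_eq_supp.
Qed.

Lemma init_cap_LM A I J : is_ideal A -> is_ideal I -> is_ideal J ->
  ideal_eq (init_ideal ord A) (ideal_cap (init_ideal ord I) (init_ideal ord J))
  <-> forall m, LM A m <-> LM I m /\ LM J m.
Proof.
move=> idA idI idJ; rewrite (ideal_eq_congr (init_char idA) (init_cap_char idI idJ)).
exact: ideal_eq_supp.
Qed.

(* Comparing ideals by their leading monomials: if A is contained in B and
   every leading monomial of B is one of A, then B is contained in A, since
   each f in B can be reduced to 0 by elements of A. *)
Lemma sub_of_LM_sub A B : is_ideal A -> is_ideal B -> (forall f, A f -> B f) ->
  (forall m, LM B m -> LM A m) -> forall f, B f -> A f.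
Proof.
move=> idA idB AB LM_BA; elim/lead_ind => [_|f m lead_f IH Bf]; first exact: ideal0.
have [g Ag lead_g] := LM_BA m (LM_of Bf lead_f).
rewrite -[f](subrK ((f@_m / g@_m) *: g)); apply: (idealD idA _ (idealZ _ idA Ag)).
apply: IH (reduce_lt (lead_supp_le lead_f) lead_g) _.
exact: idealB idB Bf (AB _ (idealZ _ idA Ag)).
Qed.

Lemma standard_rep I J : is_ideal I -> is_ideal J ->
  (forall m, LM (ideal_sum I J) m -> LM I m \/ LM J m) ->
  forall f, ideal_sum I J f -> exists j e, [/\ I j, J e, f = j + e &
    forall M, supp_lt f M -> supp_lt j M /\ supp_lt e M].
Proof.
move=> idI idJ gn; elim/lead_ind => [_|f m lead_f IH If].
  exists 0, 0; split; [exact: ideal0 idI | exact: ideal0 idJ | by rewrite addr0 |].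
  by move=> M _; split; apply: supp_in0.
have [g1 [g2 [Ig1 Jg2 le_g1 le_g2 lead_g]]] : exists g1 g2,
    [/\ I g1, J g2, supp_le g1 m, supp_le g2 m & is_lead (g1 + g2) m].
  case: (gn m (LM_of If lead_f)) => [[g Ig lead_g]|[g Jg lead_g]].
    exists g, 0; rewrite addr0; split=> //.
    - exact: ideal0 idJ.
    - exact: lead_supp_le.
    - exact: supp_in0.
  exists 0, g; rewrite add0r; split=> //.
  - exact: ideal0 idI.
  - exact: supp_in0.
  - exact: lead_supp_le.
set c := f@_m / (g1 + g2)@_m.
have lt_f' := reduce_lt (lead_supp_le lead_f) lead_g.
have [|j [e [Ij Je Ef' lt_je]]] := IH _ lt_f'.
  apply: (idealB (sum_ideal idI idJ) If (idealZ _ (sum_ideal idI idJ) _)).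
  by exists g1, g2.
exists (j + c *: g1), (e + c *: g2); split.
- exact: idealD idI Ij (idealZ _ idI Ig1).
- exact: idealD idJ Je (idealZ _ idJ Jg2).
- by rewrite -[f](subrK (c *: (g1 + g2))) Ef' scalerDr addrACA.
move=> M lt_f; have lt_mM := lt_f m lead_f.1; have [lt_j lt_e] := lt_je m lt_f'.
have lt_M : forall m', mlt m' m -> mlt m' M := fun m' lt => mlt_trans lt lt_mM.
have le_M : forall m', mle m' m -> mlt m' M := fun m' le => mle_mlt_trans le lt_mM.
split; apply: supp_inD; try apply: supp_inZ.
- exact: supp_in_weaken lt_M lt_j.
- exact: supp_in_weaken le_M le_g1.
- exact: supp_in_weaken lt_M lt_e.
- exact: supp_in_weaken le_M le_g2.
Qed.

(* G-niceness implies that a monomial leading in both I and J is leading in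
   I ∩ J: reduce j against e, write the remainder in standard form, and move
   its I-part back to j. *)
Lemma cap_LM_of_gnice I J : is_ideal I -> is_ideal J ->
  (forall m, LM (ideal_sum I J) m -> LM I m \/ LM J m) ->
  forall m, LM I m -> LM J m -> LM (ideal_cap I J) m.
Proof.
move=> idI idJ gn m [j Ij lead_j] [e Je lead_e].
set c := j@_m / e@_m; set d := j - c *: e.
have lt_d : supp_lt d m := reduce_lt (lead_supp_le lead_j) lead_e.
have Sd : ideal_sum I J d.
  exists j, ((- c) *: e); split=> //; first exact: idealZ _ idJ Je.
  by rewrite scaleNr.
have [j' [e' [Ij' Je' Ed lt_j'e']]] := standard_rep idI idJ gn Sd.
have [lt_j' lt_e'] := lt_j'e' m lt_d.
have Ejj' : j - j' = c *: e + e'.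
  by rewrite -[j](subrK (c *: e)) -/d Ed addrAC [j' + _]addrC addrK addrC.
apply: (LM_of (f := j - j')).
  by split; [apply: idealB | rewrite Ejj'; apply: idealD idJ (idealZ _ idJ Je) Je'].
apply: lead_of_supp_le.
  apply: supp_inB (lead_supp_le lead_j) _.
  by move=> m' /lt_j' /mlt_mle.
by rewrite mcoeffB (supp_lt_coef lt_j') subr0 lead_coef_neq0.
Qed.

(* If the top coefficients of j in I and e in J cancel and every monomial
   leading in I and J is leading in I ∩ J, subtracting a common element of
   I ∩ J pushes both below the top monomial without changing j + e. *)
Lemma cancel_top I J j e M : is_ideal I -> is_ideal J ->
  (forall m, LM I m -> LM J m -> LM (ideal_cap I J) m) ->
  I j -> J e -> supp_le j M -> supp_le e M -> j@_M + e@_M = 0 ->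
  exists j' e', [/\ I j', J e', j' + e' = j + e, supp_lt j' M & supp_lt e' M].
Proof.
move=> idI idJ capLM Ij Je le_j le_e top.
have [j_M|nz_jM] := eqVneq j@_M 0.
  have e_M : e@_M = 0 by rewrite -top j_M add0r.
  by exists j, e; split=> //; apply: supp_le_lt.
have nz_eM : e@_M != 0.
  by move/eqP: top; rewrite addrC addr_eq0 => /eqP ->; rewrite oppr_eq0.
have [h [Ih Jh] lead_h] := capLM M (LM_of Ij (lead_of_supp_le le_j nz_jM))
  (LM_of Je (lead_of_supp_le le_e nz_eM)).
exists (j - (j@_M / h@_M) *: h), (e - (e@_M / h@_M) *: h); split.
- exact: idealB idI Ij (idealZ _ idI Ih).
- exact: idealB idJ Je (idealZ _ idJ Jh).
- by rewrite addrACA -opprD -scalerDl -mulrDl top mul0r scale0r subr0.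
- exact: reduce_lt le_j lead_h.
- exact: reduce_lt le_e lead_h.
Qed.

(* Conversely, if leading monomials of I ∩ J are all the common ones, the
   pair is G-nice: in a representation f = j + e cancellations at the top
   monomial can be removed until the top monomial is the leading one of f. *)
Lemma gnice_of_cap_LM I J : is_ideal I -> is_ideal J ->
  (forall m, LM I m -> LM J m -> LM (ideal_cap I J) m) ->
  forall m, LM (ideal_sum I J) m -> LM I m \/ LM J m.
Proof.
move=> idI idJ capLM m0 [f [j0 [e0 [Ij0 Je0 Ef]]] lead_f].
have f_nz := lead_neq0 lead_f.
suff descent M : forall j e, I j -> J e -> j + e = f ->
    supp_le j M -> supp_le e M -> LM I m0 \/ LM J m0.
  have [|M [le_j0 le_e0] _] := joint_bound (j := j0) (e := e0); first by rewrite -Ef.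
  exact: descent M j0 e0 Ij0 Je0 (esym Ef) le_j0 le_e0.
elim/(well_founded_ind (mlt_wf ord)): M => M IH j e Ij Je Ejf le_j le_e.
have [top|no_top] := eqVneq (j@_M + e@_M) 0.
  have [j' [e' [Ij' Je' Ej'e' lt_j' lt_e']]] :=
    cancel_top idI idJ capLM Ij Je le_j le_e top.
  have [|M' [le_j' le_e'] M'_in] := joint_bound (j := j') (e := e').
    by rewrite Ej'e' Ejf.
  apply: (IH M' _ j' e') => //; last by rewrite Ej'e'.
  by case/orP: M'_in => [/lt_j'|/lt_e'].
have eq_Mm0 : M = m0.
  apply: mle_eq; first by apply: lead_f.2; rewrite -Ejf mcoeff_msupp mcoeffD.
  by move: lead_f.1; rewrite -Ejf => /msuppD_le; rewrite mem_cat => /orP [/le_j|/le_e].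
subst M; have [j_m|nz_jm] := eqVneq j@_m0 0.
  by rewrite j_m add0r in no_top; right; apply: LM_of Je (lead_of_supp_le le_e no_top).
by left; apply: LM_of Ij (lead_of_supp_le le_j nz_jm).
Qed.

Lemma gnice_iff_LM_cap I J : is_ideal I -> is_ideal J ->
  Gnice ord I J <-> forall m, LM (ideal_cap I J) m <-> LM I m /\ LM J m.
Proof.
move=> idI idJ; rewrite gnice_LM //.
have LM_cap m : LM (ideal_cap I J) m -> LM I m /\ LM J m.
  by move=> LMm; split; apply: LM_mono LMm => f [].
have LM_sum m : LM I m \/ LM J m -> LM (ideal_sum I J) m.
  by case=> /LM_mono; apply=> f; [apply: sum_l|apply: sum_r].
split=> LM_eq m; split; [exact: LM_cap| | |exact: LM_sum].
  by case; apply: (cap_LM_of_gnice idI idJ (fun m => (LM_eq m).1)).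
exact: (gnice_of_cap_LM idI idJ (fun m LMI LMJ => (LM_eq m).2 (conj LMI LMJ))).
Qed.

End InitialIdeals.

Theorem mainTheorem5 (K : fieldType) (n : nat) (ord : monomial_order n)
    (J E E' : {mpoly K[n]} -> Prop) :
  is_ideal J -> is_ideal E -> is_ideal E' ->
  Gnice ord J E -> Gnice ord J E' ->
  ((ideal_eq (ideal_sum (ideal_cap J E) (ideal_cap J E')) (ideal_cap J (ideal_sum E E'))
    /\ Gnice ord J (ideal_sum E E'))
   <->
   ideal_eq (init_ideal ord (ideal_sum (ideal_cap J E) (ideal_cap J E')))
            (ideal_cap (init_ideal ord J) (init_ideal ord (ideal_sum E E')))).
Proof.
move=> idJ idE idE' _ _.
set E2 := ideal_sum E E'; set B := ideal_cap J E2.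
set A := ideal_sum (ideal_cap J E) (ideal_cap J E').
have idE2 : is_ideal E2 := sum_ideal idE idE'.
have idA : is_ideal A := sum_ideal (cap_ideal idJ idE) (cap_ideal idJ idE').
have A_B f : A f -> B f.
  by case=> [g [h [[Jg Eg] [Jh E'h] ->]]]; split; [apply: idealD | exists g, h].
rewrite (init_cap_LM _ idA idJ idE2) (gnice_iff_LM_cap _ idJ idE2).
split=> [[eq_AB LM_B] m|LM_A].
  by rewrite -LM_B; split; apply: LM_mono => f /eq_AB.
have LM_BA m : LM ord B m -> LM ord A m.
  by move=> LMm; apply/LM_A; split; apply: LM_mono LMm => f [].
have B_A := sub_of_LM_sub idA (cap_ideal idJ idE2) A_B LM_BA.
split=> [f|m]; first by split; [apply: A_B|apply: B_A].
by rewrite -LM_A; split; [apply: LM_BA|apply: LM_mono A_B].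
Qed.
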